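(* Let $N\ge1$ and $k>0$ with $\#\mathcal O^\times\mid k$. If $D_K=4$, $D_K=8$, or $D_K\equiv3\pmod 4$ is prime, then $J^{\rm spez}_{k,1}(N)=J_{k,1}(N)$.
   Context: $K$ is an imaginary quadratic field of class number one with discriminant $-D_K$, ring of integers $\mathcal O$, $N(a)=a\bar a$, $\mathcal D^{-1}=\mathcal O/\sqrt{-D_K}$, $e[z]=e^{2\pi iz}$. $J_{k,1}(N)$ is the space of Hermitian Jacobi forms of weight $k$, index $1$ and level $N$: holomorphic $\varphi:\mathbf H\times\mathbf C^2\to\mathbf C$ such that (a) for all $\epsilon\in\mathcal O^\times$ and $\begin{pmatrix}a&b\\ c&d\end{pmatrix}\in\Gamma_0(N)$: $(c\tau+d)^{-k}e[-\frac{czw}{c\tau+d}]\varphi(\frac{a\tau+b}{c\tau+d},\frac{\epsilon z}{c\tau+d},\frac{\bar\epsilon w}{c\tau+d})=\varphi(\tau,z,w)$; (b) for all $\lambda,\mu\in\mathcal O$: $e[N(\lambda)\tau+\bar\lambda z+\lambda w]\varphi(\tau,z+\lambda\tau+\mu,w+\bar\lambda\tau+\bar\mu)=\varphi(\tau,z,w)$; (c) for each $M\in\mathrm{SL}_2(\mathbf Z)$ the transform of $\varphi$ by $M$ as in (a) (with $\epsilon=1$) has an expansion $\sum_{\ell\ge0,t\in\mathcal D^{-1},\nu N(t)\le\ell}c^M(\ell,t)e[\frac\ell\nu\tau+\bar tz+tw]$ with $\nu\in\mathbf Z_{>0}$, $\nu=1$ for $M=I_2$; $c_\varphi(\ell,t):=c^{I_2}(\ell,t)$.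 $J^{\rm spez}_{k,1}(N)$ is the subspace of $\varphi$ whose coefficients $c_\varphi(\ell,t)$ depend only on $\ell-N(t)$. *)

From Stdlib Require Import Reals ZArith Znumtheory List Lia.
Open Scope R_scope.

Definition Cx : Type := (R * R)%type.
Definition Re (z : Cx) : R := fst z.
Definition Im (z : Cx) : R := snd z.
Definition RtoC (x : R) : Cx := (x, 0).
Definition ZtoC (n : Z) : Cx := (IZR n, 0).
Definition C0 : Cx := (0, 0).
Definition C1 : Cx := (1, 0).
Definition Cadd (z w : Cx) : Cx := (Re z + Re w, Im z + Im w).
Definition Copp (z : Cx) : Cx := (- Re z, - Im z).
Definition Csub (z w : Cx) : Cx := Cadd z (Copp w).
Definition Cmul (z w : Cx) : Cx :=
  (Re z * Re w - Im z * Im w, Re z * Im w + Im z * Re w).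
Definition Cnorm2 (z : Cx) : R := Re z * Re z + Im z * Im z.
Definition Cabs (z : Cx) : R := sqrt (Cnorm2 z).
Definition Cinv (z : Cx) : Cx := (Re z / Cnorm2 z, - Im z / Cnorm2 z).
Definition Cdiv (z w : Cx) : Cx := Cmul z (Cinv w).
Definition Cconj (z : Cx) : Cx := (Re z, - Im z).
Fixpoint Cpow (z : Cx) (n : nat) : Cx :=
  match n with O => C1 | S m => Cmul z (Cpow z m) end.

(** e[z] = exp(2 pi i z) *)
Definition ee (z : Cx) : Cx :=
  (exp (- 2 * PI * Im z) * cos (2 * PI * Re z),
   exp (- 2 * PI * Im z) * sin (2 * PI * Re z)).

Definition Cconv (u : nat -> Cx) (L : Cx) : Prop :=
  Un_cv (fun n => Re (u n)) (Re L) /\ Un_cv (fun n => Im (u n)) (Im L).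

(** * The field K = Q(sqrt(-D)), D = D_K > 0 *)
Definition sqrtmD (D : Z) : Cx := (0, sqrt (IZR D)).
(** omega = (-D + sqrt(-D))/2, so that O = Z + Z omega *)
Definition omega (D : Z) : Cx := (- IZR D / 2, sqrt (IZR D) / 2).
Definition elt (D : Z) (a b : Z) : Cx := Cadd (ZtoC a) (Cmul (ZtoC b) (omega D)).
Definition in_O (D : Z) (z : Cx) : Prop := exists a b : Z, z = elt D a b.
Definition is_unit (D : Z) (z : Cx) : Prop := z <> C0 /\ in_O D z /\ in_O D (Cinv z).
(** inverse different D^{-1} = O / sqrt(-D) *)
Definition in_Ddual (D : Z) (t : Cx) : Prop :=
  exists x, in_O D x /\ t = Cdiv x (sqrtmD D).
Definition t_of (D : Z) (a b : Z) : Cx := Cdiv (elt D a b) (sqrtmD D).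

Definition is_ideal (D : Z) (I : Cx -> Prop) : Prop :=
  (forall x, I x -> in_O D x) /\ I C0 /\
  (forall x y, I x -> I y -> I (Cadd x y)) /\
  (forall r x, in_O D r -> I x -> I (Cmul r x)).
Definition class_number_one (D : Z) : Prop :=
  forall I, is_ideal D I ->
    exists g, in_O D g /\ forall x, I x <-> exists y, in_O D y /\ x = Cmul g y.

Definition units_card_divides (D : Z) (k : nat) : Prop :=
  exists l : list Cx, NoDup l /\ (forall z, In z l <-> is_unit D z) /\
    Nat.divide (length l) k.

Definition upper (tau : Cx) : Prop := 0 < Im tau.

Definition Cdiff_at (f : Cx -> Cx) (z : Cx) : Prop :=
  exists L : Cx, forall eps, 0 < eps -> exists del, 0 < del /\
    forall h, h <> C0 -> Cabs h < del ->
      Cabs (Csub (Cdiv (Csub (f (Cadd z h)) (f z)) h) L) < eps.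

(** holomorphic = continuous and holomorphic in each variable separately (Osgood) *)
Definition holomorphic_HCC (phi : Cx -> Cx -> Cx -> Cx) : Prop :=
  forall tau z w, upper tau ->
    (forall eps, 0 < eps -> exists del, 0 < del /\
       forall tau' z' w', Cabs (Csub tau' tau) < del -> Cabs (Csub z' z) < del ->
         Cabs (Csub w' w) < del -> Cabs (Csub (phi tau' z' w') (phi tau z w)) < eps) /\
    Cdiff_at (fun t => phi t z w) tau /\
    Cdiff_at (fun t => phi tau t w) z /\
    Cdiff_at (fun t => phi tau z t) w.

Definition slash (k : nat) (a b c d : Z) (eps : Cx) (phi : Cx -> Cx -> Cx -> Cx)
  (tau z w : Cx) : Cx :=
  let j := Cadd (Cmul (ZtoC c) tau) (ZtoC d) in
  Cmul (Cmul (Cinv (Cpow j k))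
             (ee (Copp (Cdiv (Cmul (Cmul (ZtoC c) z) w) j))))
       (phi (Cdiv (Cadd (Cmul (ZtoC a) tau) (ZtoC b)) j)
            (Cdiv (Cmul eps z) j) (Cdiv (Cmul (Cconj eps) w) j)).

Definition zrange (n : nat) : list Z :=
  map (fun i => (Z.of_nat i - Z.of_nat n)%Z) (seq 0 (2 * n + 1)).

Definition box_sumC (g : nat -> Z -> Z -> Cx) (n : nat) : Cx :=
  fold_right Cadd C0 (map (fun l =>
    fold_right Cadd C0 (map (fun a =>
      fold_right Cadd C0 (map (fun b => g l a b) (zrange n))) (zrange n)))
  (seq 0 (S n))).
Definition box_sumR (g : nat -> Z -> Z -> R) (n : nat) : R :=
  fold_right Rplus 0 (map (fun l =>
    fold_right Rplus 0 (map (fun a =>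
      fold_right Rplus 0 (map (fun b => g l a b) (zrange n))) (zrange n)))
  (seq 0 (S n))).

(** term c(l,t) e[(l/nu) tau + conj(t) z + t w], restricted to nu N(t) <= l;
    t = (a + b omega)/sqrt(-D) runs over D^{-1} bijectively *)
Definition fterm (D : Z) (nu : nat) (cf : nat -> Cx -> Cx) (tau z w : Cx)
  (l : nat) (a b : Z) : Cx :=
  let t := t_of D a b in
  if Rle_dec (INR nu * Cnorm2 t) (INR l) then
    Cmul (cf l t)
         (ee (Cadd (Cadd (Cmul (RtoC (INR l / INR nu)) tau) (Cmul (Cconj t) z))
                   (Cmul t w)))
  else C0.

Definition has_expansion (D : Z) (nu : nat) (f : Cx -> Cx -> Cx -> Cx)
  (cf : nat -> Cx -> Cx) : Prop :=
  forall tau z w, upper tau ->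
    (exists B, forall n, box_sumR (fun l a b => Cabs (fterm D nu cf tau z w l a b)) n <= B) /\
    Cconv (box_sumC (fterm D nu cf tau z w)) (f tau z w).

Definition is_HJF (D : Z) (k N : nat) (phi : Cx -> Cx -> Cx -> Cx) : Prop :=
  holomorphic_HCC phi /\
  (* (a) *)
  (forall (eps : Cx) (a b c d : Z), is_unit D eps -> (a * d - b * c = 1)%Z ->
     (Z.of_nat N | c)%Z ->
     forall tau z w, upper tau -> slash k a b c d eps phi tau z w = phi tau z w) /\
  (* (b) *)
  (forall lam mu, in_O D lam -> in_O D mu ->
     forall tau z w, upper tau ->
       Cmul (ee (Cadd (Cadd (Cmul (RtoC (Cnorm2 lam)) tau) (Cmul (Cconj lam) z))
                      (Cmul lam w)))
            (phi tau (Cadd (Cadd z (Cmul lam tau)) mu)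
                     (Cadd (Cadd w (Cmul (Cconj lam) tau)) (Cconj mu)))
       = phi tau z w) /\
  (* (c) *)
  (forall a b c d : Z, (a * d - b * c = 1)%Z ->
     exists nu : nat, (0 < nu)%nat /\
       ((a = 1 /\ b = 0 /\ c = 0 /\ d = 1)%Z -> nu = 1%nat) /\
       exists cf : nat -> Cx -> Cx, has_expansion D nu (slash k a b c d C1 phi) cf).

Definition is_HJF_spez (D : Z) (k N : nat) (phi : Cx -> Cx -> Cx -> Cx) : Prop :=
  is_HJF D k N phi /\
  forall cf : nat -> Cx -> Cx, has_expansion D 1 phi cf ->
    forall (l1 l2 : nat) (t1 t2 : Cx), in_Ddual D t1 -> in_Ddual D t2 ->
      Cnorm2 t1 <= INR l1 -> Cnorm2 t2 <= INR l2 ->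
      INR l1 - Cnorm2 t1 = INR l2 - Cnorm2 t2 ->
      cf l1 t1 = cf l2 t2.

From Pilot Require Import Defs.
From Stdlib Require Import Reals ZArith Znumtheory List Lia Lra.
Open Scope R_scope.

(* Each Fourier coefficient is determined by phi: averaging phi(tau + x, z + u, w + conj u)
   against the character of the (l, t)-term over the points (x, u) of
   (M^-1 Z / Z) x (M^-1 O / O) annihilates every term of the absolutely convergent expansion
   not congruent to (l, t) modulo M, and as M grows the survivors shrink to the single term
   c(l, t) e[...].  Hence every symmetry of phi passes to its coefficients: the unit action (a)
   gives c(l, t) = c(l, eps t), and the elliptic transformation (b) by lambda in O gives
   c(l, t) = c(l', t - lambda) with l' - N(t - lambda) = l - N(t).  It remains to see that
   D N(t) mod D determines t modulo O up to a unit: for prime D = 3 mod 4 because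
   N(a + b omega) = a^2 mod D, and for D = 4, 8 by a computation modulo 4, resp. 8. *)

(* Reduce an equation in [Cx] to its two real components, splitting the [Cx] variables. *)
Ltac cx := repeat match goal with |- context [?z] => is_var z;
    lazymatch type of z with Cx => destruct z end end;
  cbv [Cmul Cadd Copp Csub Cconj C0 Defs.C1 RtoC ZtoC Re Im fst snd];
  apply (f_equal2 pair).

Lemma Cmul_comm x y : Cmul x y = Cmul y x. Proof. cx; ring. Qed.
Lemma Cmul_assoc x y z : Cmul x (Cmul y z) = Cmul (Cmul x y) z. Proof. cx; ring. Qed.
Lemma Cadd_assoc x y z : Cadd x (Cadd y z) = Cadd (Cadd x y) z. Proof. cx; ring. Qed.
Lemma Cadd_0_l x : Cadd C0 x = x. Proof. cx; ring. Qed.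
Lemma Cadd_0_r x : Cadd x C0 = x. Proof. cx; ring. Qed.
Lemma Cmul_1_l x : Cmul Defs.C1 x = x. Proof. cx; ring. Qed.
Lemma Cmul_1_r x : Cmul x Defs.C1 = x. Proof. cx; ring. Qed.
Lemma Cmul_0_l x : Cmul C0 x = C0. Proof. cx; ring. Qed.
Lemma Cmul_0_r x : Cmul x C0 = C0. Proof. cx; ring. Qed.
Lemma Cmul_add_r x y z : Cmul x (Cadd y z) = Cadd (Cmul x y) (Cmul x z). Proof. cx; ring. Qed.

Lemma Cmul_integral a b : Cmul a b = C0 -> a <> C0 -> b = C0.
Proof.
  destruct a as [a1 a2], b as [b1 b2]; cbv [Cmul C0 Re Im fst snd].
  intros H Ha; injection H as H1 H2.
  assert (Hp : 0 < a1 * a1 + a2 * a2).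
  { destruct (Req_dec a1 0), (Req_dec a2 0); subst; try nra. exfalso; apply Ha; auto. }
  assert (E1 : (a1 * a1 + a2 * a2) * b1 = a1 * (a1 * b1 - a2 * b2) + a2 * (a1 * b2 + a2 * b1))
    by ring.
  assert (E2 : (a1 * a1 + a2 * a2) * b2 = a1 * (a1 * b2 + a2 * b1) - a2 * (a1 * b1 - a2 * b2))
    by ring.
  rewrite H1, H2, Rmult_0_r, Rmult_0_r, Rplus_0_r in E1.
  rewrite H1, H2, Rmult_0_r, Rmult_0_r, Rminus_0_r in E2.
  apply Rmult_integral in E1, E2.
  destruct E1, E2; try lra; subst; reflexivity.
Qed.

Lemma Cmul_cancel_r a b e : e <> C0 -> Cmul a e = Cmul b e -> a = b.
Proof.
  intros He H.
  assert (Hd : Cmul e (Csub a b) = C0).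
  { transitivity (Csub (Cmul a e) (Cmul b e)); [cx; ring|]. rewrite H. cx; ring. }
  apply Cmul_integral in Hd; auto.
  destruct a, b; cbv [Csub Cadd Copp C0 Re Im fst snd] in Hd.
  injection Hd as E1 E2. apply (f_equal2 pair); lra.
Qed.

Lemma ee_add x y : ee (Cadd x y) = Cmul (ee x) (ee y).
Proof.
  destruct x as [x1 x2], y as [y1 y2]; unfold ee; cbv [Cadd Cmul Re Im fst snd].
  replace (-2 * PI * (x2 + y2)) with (-2 * PI * x2 + -2 * PI * y2) by ring.
  replace (2 * PI * (x1 + y1)) with (2 * PI * x1 + 2 * PI * y1) by ring.
  rewrite exp_plus, cos_plus, sin_plus. apply (f_equal2 pair); ring.
Qed.

Lemma ee_neq0 x : ee x <> C0.
Proof.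
  destruct x as [x1 x2]; unfold ee, C0, Re, Im; simpl.
  intro H; injection H as H1 H2.
  pose proof (exp_pos (-2 * PI * x2)).
  apply Rmult_integral in H1, H2.
  destruct H1, H2; try lra.
  pose proof (sin2_cos2 (2 * PI * x1)) as Hsc. unfold Rsqr in Hsc. nra.
Qed.

Lemma ee_0 : ee C0 = Defs.C1.
Proof.
  unfold ee, C0, Defs.C1, Re, Im; simpl.
  rewrite !Rmult_0_r, exp_0, cos_0, sin_0. apply (f_equal2 pair); ring.
Qed.

Lemma ee_IZR (n : Z) : ee (IZR n, 0) = Defs.C1.
Proof.
  unfold ee, Defs.C1, Re, Im; simpl. rewrite Rmult_0_r, exp_0.
  assert (Hs : sin (PI * IZR n) = 0) by (apply sin_eq_0_1; exists n; ring).
  replace (2 * PI * IZR n) with (2 * (PI * IZR n)) by ring.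
  rewrite cos_2a_sin, sin_2a, Hs. apply (f_equal2 pair); ring.
Qed.

Lemma ee_eq1_IZR (x : R) : ee (x, 0) = Defs.C1 -> exists n : Z, x = IZR n.
Proof.
  unfold ee, Defs.C1, Re, Im; simpl. rewrite Rmult_0_r, exp_0.
  intro H; injection H as H1 _.
  replace (2 * PI * x) with (2 * (PI * x)) in H1 by ring.
  rewrite cos_2a_sin in H1.
  assert (Hs : sin (PI * x) = 0) by nra.
  destruct (sin_eq_0_0 _ Hs) as [n Hn]. exists n. pose proof PI_RGT_0. nra.
Qed.

Definition csum {A} (L : list A) (f : A -> Cx) : Cx := fold_right Cadd C0 (map f L).
Definition rsum {A} (L : list A) (f : A -> R) : R := fold_right Rplus 0 (map f L).

Lemma csum_cons {A} (x : A) L f : csum (x :: L) f = Cadd (f x) (csum L f).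
Proof. reflexivity. Qed.
Lemma rsum_cons {A} (x : A) L f : rsum (x :: L) f = f x + rsum L f.
Proof. reflexivity. Qed.

Lemma csum_app {A} (L1 L2 : list A) f : csum (L1 ++ L2) f = Cadd (csum L1 f) (csum L2 f).
Proof.
  induction L1; simpl; [now rewrite Cadd_0_l|].
  rewrite csum_cons, IHL1. apply Cadd_assoc.
Qed.
Lemma rsum_app {A} (L1 L2 : list A) f : rsum (L1 ++ L2) f = rsum L1 f + rsum L2 f.
Proof. induction L1; simpl; [unfold rsum; simpl; ring|]. rewrite !rsum_cons, IHL1. ring. Qed.

Lemma csum_ext {A} (L : list A) f g :
  (forall x, In x L -> f x = g x) -> csum L f = csum L g.
Proof. intro H. unfold csum. f_equal. apply map_ext_in. exact H. Qed.
Lemma rsum_ext {A} (L : list A) f g :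
  (forall x, In x L -> f x = g x) -> rsum L f = rsum L g.
Proof. intro H. unfold rsum. f_equal. apply map_ext_in. exact H. Qed.

Lemma csum_add {A} (L : list A) f g :
  csum L (fun x => Cadd (f x) (g x)) = Cadd (csum L f) (csum L g).
Proof. induction L; [unfold csum; simpl; cx; ring|]. rewrite !csum_cons, IHL. cx; ring. Qed.
Lemma rsum_add {A} (L : list A) f g : rsum L (fun x => f x + g x) = rsum L f + rsum L g.
Proof. induction L; [unfold rsum; simpl; ring|]. rewrite !rsum_cons, IHL. ring. Qed.

Lemma csum_mul_l {A} (L : list A) k f : Cmul k (csum L f) = csum L (fun x => Cmul k (f x)).
Proof. induction L; [unfold csum; simpl; cx; ring|]. rewrite !csum_cons, <- IHL. apply Cmul_add_r. Qed.
Lemma csum_mul_r {A} (L : list A) k f : Cmul (csum L f) k = csum L (fun x => Cmul (f x) k).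
Proof. rewrite Cmul_comm, csum_mul_l. apply csum_ext; intros; apply Cmul_comm. Qed.

Lemma csum_0 {A} (L : list A) f : (forall x, In x L -> f x = C0) -> csum L f = C0.
Proof.
  intro H. rewrite (csum_ext L f (fun _ => C0)) by auto.
  clear H; induction L; auto. rewrite csum_cons, IHL. cx; ring.
Qed.

Lemma csum_const1 {A} (L : list A) : csum L (fun _ => Defs.C1) = RtoC (INR (length L)).
Proof. induction L; [unfold csum; simpl; cx; ring|]. rewrite csum_cons, IHL, length_cons, S_INR. cx; ring. Qed.

Lemma csum_comm {A B} (L1 : list A) (L2 : list B) f :
  csum L1 (fun x => csum L2 (fun y => f x y)) = csum L2 (fun y => csum L1 (fun x => f x y)).
Proof.
  induction L1; [symmetry; apply csum_0; auto|].
  rewrite csum_cons, IHL1, <- csum_add. apply csum_ext; intros; now rewrite csum_cons.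
Qed.

Lemma csum_single {A} (L : list A) f x0 : NoDup L -> In x0 L ->
  (forall x, In x L -> x <> x0 -> f x = C0) -> csum L f = f x0.
Proof.
  induction L as [|y L IH]; intros Hnd Hin H; [destruct Hin|].
  inversion Hnd; subst. rewrite csum_cons. destruct Hin as [<-|Hin].
  - rewrite csum_0; [apply Cadd_0_r|]. intros x Hx. apply H; [right; auto|congruence].
  - rewrite IH, H; auto; [apply Cadd_0_l|left; auto|congruence|].
    intros; apply H; auto; right; auto.
Qed.

Lemma Re_csum {A} (L : list A) f : Re (csum L f) = rsum L (fun x => Re (f x)).
Proof. induction L; [reflexivity|]. rewrite csum_cons, rsum_cons, <- IHL. reflexivity. Qed.
Lemma Im_csum {A} (L : list A) f : Im (csum L f) = rsum L (fun x => Im (f x)).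
Proof. induction L; [reflexivity|]. rewrite csum_cons, rsum_cons, <- IHL. reflexivity. Qed.

Lemma rsum_le {A} (L : list A) f g :
  (forall x, In x L -> f x <= g x) -> rsum L f <= rsum L g.
Proof.
  induction L; intros H; [unfold rsum; simpl; lra|]. rewrite !rsum_cons.
  assert (f a <= g a) by (apply H; left; auto).
  assert (rsum L f <= rsum L g) by (apply IHL; intros; apply H; right; auto). lra.
Qed.
Lemma rsum_nonneg {A} (L : list A) f : (forall x, In x L -> 0 <= f x) -> 0 <= rsum L f.
Proof.
  intros H. replace 0 with (rsum L (fun _ => 0)); [apply rsum_le; auto|].
  clear H; induction L; auto. rewrite rsum_cons, IHL. ring.
Qed.
Lemma Rabs_rsum {A} (L : list A) f : Rabs (rsum L f) <= rsum L (fun x => Rabs (f x)).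
Proof.
  induction L; [unfold rsum; simpl; rewrite Rabs_R0; lra|]. rewrite !rsum_cons.
  eapply Rle_trans; [apply Rabs_triang|lra].
Qed.
Lemma rsum_infix_le {A} (L L1 L2 : list A) f : (forall x, In x (L1 ++ L ++ L2) -> 0 <= f x) ->
  rsum L f <= rsum (L1 ++ L ++ L2) f.
Proof.
  intros H. rewrite !rsum_app.
  assert (0 <= rsum L1 f) by (apply rsum_nonneg; intros; apply H; apply in_or_app; auto).
  assert (0 <= rsum L2 f)
    by (apply rsum_nonneg; intros; apply H; apply in_or_app; right; apply in_or_app; auto).
  lra.
Qed.

Lemma Rabs_Re_le z : Rabs (Re z) <= Cabs z.
Proof.
  destruct z as [a b]; unfold Cabs, Cnorm2, Re, Im; simpl.
  rewrite <- sqrt_Rsqr_abs. apply sqrt_le_1_alt. unfold Rsqr; nra.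
Qed.
Lemma Rabs_Im_le z : Rabs (Im z) <= Cabs z.
Proof.
  destruct z as [a b]; unfold Cabs, Cnorm2, Re, Im; simpl.
  rewrite <- sqrt_Rsqr_abs. apply sqrt_le_1_alt. unfold Rsqr; nra.
Qed.

Lemma Cabs_nonneg z : 0 <= Cabs z.
Proof. apply sqrt_pos. Qed.

Lemma Cabs_C0 : Cabs C0 = 0.
Proof. unfold Cabs, Cnorm2, C0, Re, Im; cbn. rewrite Rmult_0_r, Rplus_0_r. apply sqrt_0. Qed.

Definition root_sum (M : nat) (n : Z) : Cx :=
  csum (seq 0 M) (fun j => ee (IZR n * INR j / INR M, 0)).

Lemma root_sum_dvd M n : (0 < M)%nat -> (Z.of_nat M | n)%Z -> root_sum M n = RtoC (INR M).
Proof.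
  intros HM [k ->]. unfold root_sum.
  rewrite (csum_ext _ _ (fun _ => Defs.C1)), csum_const1, length_seq; auto.
  intros j _. replace (IZR (k * Z.of_nat M) * INR j / INR M) with (IZR (k * Z.of_nat j)).
  - apply ee_IZR.
  - rewrite !mult_IZR, <- !INR_IZR_INZ. field. apply not_0_INR; lia.
Qed.

(* Multiplying by r = e[n/M] shifts the summation index cyclically, so (r - 1) * sum = 0. *)
Lemma root_sum_ndvd M n : (0 < M)%nat -> ~ (Z.of_nat M | n)%Z -> root_sum M n = C0.
Proof.
  intros HM Hn. destruct M as [|M]; [lia|].
  assert (HM' : INR (S M) <> 0) by (apply not_0_INR; lia).
  set (r := ee (IZR n / INR (S M), 0)).
  assert (Hr : Csub r Defs.C1 <> C0).
  { intro H. assert (Hr1 : r = Defs.C1).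
    { revert H; generalize r; intros [r1 r2] H.
      cbv [Csub Cadd Copp C0 Defs.C1 Re Im fst snd] in *.
      injection H as H1 H2. apply (f_equal2 pair); lra. }
    destruct (ee_eq1_IZR _ Hr1) as [k Hk]. apply Hn. exists k.
    apply eq_IZR. rewrite mult_IZR, <- INR_IZR_INZ, <- Hk. field; auto. }
  apply (Cmul_integral (Csub r Defs.C1)); auto.
  assert (Hshift : Cmul r (root_sum (S M) n) = root_sum (S M) n).
  { unfold root_sum. rewrite csum_mul_l.
    transitivity (csum (seq 1 (S M)) (fun j => ee (IZR n * INR j / INR (S M), 0))).
    - rewrite <- seq_shift. unfold csum. rewrite map_map. fold (csum (seq 0 (S M))
        (fun j => ee (IZR n * INR (S j) / INR (S M), 0))).
      apply csum_ext. intros j _. unfold r. rewrite <- ee_add. f_equal.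
      cbv [Cadd Re Im fst snd]. rewrite (S_INR j). apply (f_equal2 pair); [field; auto|ring].
    - rewrite seq_S. change (seq 0 (S M)) with (0%nat :: seq 1 M).
      rewrite csum_app, !csum_cons. cbn [csum fold_right map].
      replace (IZR n * INR (1 + M) / INR (S M)) with (IZR n)
        by (replace (1 + M)%nat with (S M) by lia; field; auto).
      replace (IZR n * INR 0 / INR (S M)) with (IZR 0) by (rewrite INR_0; simpl; field; auto).
      rewrite !ee_IZR. generalize (csum (seq 1 M) (fun j => ee (IZR n * INR j / INR (S M), 0))).
      intro c. cx; ring. }
  revert Hshift. generalize (root_sum (S M) n). clearbody r. intros c H.
  transitivity (Csub (Cmul r c) c); [clear H Hr; cx; ring|]. rewrite H. clear; cx; ring.
Qed.

Lemma box_sumC_eq g n : box_sumC g n =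
  csum (seq 0 (S n)) (fun l => csum (zrange n) (fun a => csum (zrange n) (fun b => g l a b))).
Proof. reflexivity. Qed.
Lemma box_sumR_eq g n : box_sumR g n =
  rsum (seq 0 (S n)) (fun l => rsum (zrange n) (fun a => rsum (zrange n) (fun b => g l a b))).
Proof. reflexivity. Qed.

Lemma in_zrange n a : In a (zrange n) <-> (- Z.of_nat n <= a <= Z.of_nat n)%Z.
Proof.
  unfold zrange. rewrite in_map_iff. split.
  - intros [i [<- Hin]]. apply in_seq in Hin. lia.
  - intros H. exists (Z.to_nat (a + Z.of_nat n)). split; [lia|]. apply in_seq. lia.
Qed.

Lemma NoDup_zrange n : NoDup (zrange n).
Proof.
  apply NoDup_map_NoDup_ForallPairs; [|apply seq_NoDup]. intros x y _ _ H. lia.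
Qed.

Lemma zrange_S n : zrange (S n) = (- Z.of_nat (S n))%Z :: zrange n ++ (Z.of_nat (S n) :: nil).
Proof.
  unfold zrange. replace (2 * S n + 1)%nat with (S (S (2 * n + 1))) by lia.
  rewrite seq_S. simpl seq. simpl map. f_equal.
  change (Z.pos (Pos.of_succ_nat n)) with (Z.of_nat (S n)).
  rewrite map_app. simpl map. f_equal.
  - rewrite <- seq_shift, map_map. apply map_ext. intros; lia.
  - f_equal. change (Z.pos_sub ?p ?q) with (Z.pos p - Z.pos q)%Z.
    rewrite !Zpos_P_of_succ_nat. lia.
Qed.

Lemma zrange_infix m d : exists L1 L2, zrange (m + d) = L1 ++ zrange m ++ L2.
Proof.
  induction d as [|d [L1 [L2 E]]].
  - exists nil, nil. now rewrite app_nil_r, Nat.add_0_r.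
  - rewrite Nat.add_succ_r, zrange_S, E.
    eexists (_ :: L1), (L2 ++ _). simpl. now rewrite <- !app_assoc.
Qed.

Definition in_box (m l : nat) (a b : Z) : Prop :=
  (l <= m)%nat /\ (- Z.of_nat m <= a <= Z.of_nat m)%Z /\ (- Z.of_nat m <= b <= Z.of_nat m)%Z.

Lemma in_box_dec m l a b : {in_box m l a b} + {~ in_box m l a b}.
Proof.
  unfold in_box. destruct (le_dec l m), (Z_le_dec (- Z.of_nat m) a), (Z_le_dec a (Z.of_nat m)),
    (Z_le_dec (- Z.of_nat m) b), (Z_le_dec b (Z.of_nat m)); (left; lia) || (right; lia).
Qed.

Lemma in_box_le m n l a b : (m <= n)%nat -> in_box m l a b -> in_box n l a b.
Proof. unfold in_box; lia. Qed.

Lemma box_sumR_le g1 g2 n : (forall l a b, in_box n l a b -> g1 l a b <= g2 l a b) ->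
  box_sumR g1 n <= box_sumR g2 n.
Proof.
  intros H. rewrite !box_sumR_eq.
  apply rsum_le; intros l Hl; apply rsum_le; intros a Ha; apply rsum_le; intros b Hb.
  apply in_seq in Hl. apply in_zrange in Ha, Hb. apply H. unfold in_box; lia.
Qed.

Lemma box_sumR_ext g1 g2 n : (forall l a b, in_box n l a b -> g1 l a b = g2 l a b) ->
  box_sumR g1 n = box_sumR g2 n.
Proof. intros H. apply Rle_antisym; apply box_sumR_le; intros; rewrite H; auto; lra. Qed.

Lemma box_sumR_mono g m n : (m <= n)%nat -> (forall l a b, 0 <= g l a b) ->
  box_sumR g m <= box_sumR g n.
Proof.
  intros Hmn Hg. replace n with (m + (n - m))%nat by lia. generalize (n - m)%nat as d; intro d.
  destruct (zrange_infix m d) as [L1 [L2 E]].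
  set (Z2 := zrange (m + d)).
  assert (Hrow : forall l, rsum (zrange m) (fun a => rsum (zrange m) (fun b => g l a b))
                  <= rsum Z2 (fun a => rsum Z2 (fun b => g l a b))).
  { intro l. apply Rle_trans with (rsum Z2 (fun a => rsum (zrange m) (fun b => g l a b))).
    - unfold Z2; rewrite E. apply rsum_infix_le. intros; apply rsum_nonneg; auto.
    - apply rsum_le; intros. unfold Z2; rewrite E. apply rsum_infix_le; auto. }
  rewrite !box_sumR_eq. fold Z2.
  replace (S (m + d)) with (S m + d)%nat by lia. rewrite seq_app, rsum_app.
  assert (0 <= rsum (seq (0 + S m) d) (fun l => rsum Z2 (fun a => rsum Z2 (fun b => g l a b))))
    by (repeat (apply rsum_nonneg; intros); auto).
  assert (rsum (seq 0 (S m)) (fun l => rsum (zrange m) (fun a => rsum (zrange m) (fun b => g l a b)))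
          <= rsum (seq 0 (S m)) (fun l => rsum Z2 (fun a => rsum Z2 (fun b => g l a b))))
    by (apply rsum_le; auto).
  lra.
Qed.

Lemma box_sumR_add g1 g2 n :
  box_sumR (fun l a b => g1 l a b + g2 l a b) n = box_sumR g1 n + box_sumR g2 n.
Proof.
  rewrite !box_sumR_eq, <- rsum_add. apply rsum_ext; intros.
  rewrite <- rsum_add. apply rsum_ext; intros. apply rsum_add.
Qed.

Lemma Rabs_box_sumR g n : Rabs (box_sumR g n) <= box_sumR (fun l a b => Rabs (g l a b)) n.
Proof.
  rewrite !box_sumR_eq. eapply Rle_trans; [apply Rabs_rsum|]. apply rsum_le; intros.
  eapply Rle_trans; [apply Rabs_rsum|]. apply rsum_le; intros. apply Rabs_rsum.
Qed.

Lemma Re_box_sumC g n : Re (box_sumC g n) = box_sumR (fun l a b => Re (g l a b)) n.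
Proof.
  rewrite box_sumC_eq, box_sumR_eq, Re_csum. apply rsum_ext; intros.
  rewrite Re_csum. apply rsum_ext; intros. apply Re_csum.
Qed.
Lemma Im_box_sumC g n : Im (box_sumC g n) = box_sumR (fun l a b => Im (g l a b)) n.
Proof.
  rewrite box_sumC_eq, box_sumR_eq, Im_csum. apply rsum_ext; intros.
  rewrite Im_csum. apply rsum_ext; intros. apply Im_csum.
Qed.

Lemma box_sumC_add g1 g2 n :
  box_sumC (fun l a b => Cadd (g1 l a b) (g2 l a b)) n = Cadd (box_sumC g1 n) (box_sumC g2 n).
Proof.
  rewrite !box_sumC_eq, <- csum_add. apply csum_ext; intros.
  rewrite <- csum_add. apply csum_ext; intros. apply csum_add.
Qed.

Lemma box_sumC_ext g1 g2 n : (forall l a b, g1 l a b = g2 l a b) -> box_sumC g1 n = box_sumC g2 n.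
Proof. intros H. rewrite !box_sumC_eq. repeat (apply csum_ext; intros); auto. Qed.

Lemma box_sumC_mul_l k g n : Cmul k (box_sumC g n) = box_sumC (fun l a b => Cmul k (g l a b)) n.
Proof.
  rewrite !box_sumC_eq, csum_mul_l. apply csum_ext; intros.
  rewrite csum_mul_l. apply csum_ext; intros. apply csum_mul_l.
Qed.

Lemma box_sumC_single g n l0 a0 b0 : in_box n l0 a0 b0 ->
  (forall l a b, (l, a, b) <> (l0, a0, b0) -> g l a b = C0) -> box_sumC g n = g l0 a0 b0.
Proof.
  intros Hin H. unfold in_box in Hin. rewrite box_sumC_eq.
  rewrite (csum_single _ _ l0); [|apply seq_NoDup|apply in_seq; lia|].
  - rewrite (csum_single _ _ a0); [|apply NoDup_zrange|apply in_zrange; lia|].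
    + apply (csum_single _ _ b0); [apply NoDup_zrange|apply in_zrange; lia|].
      intros b _ Hb. apply H. congruence.
    + intros a _ Ha. apply csum_0. intros b _. apply H. congruence.
  - intros l _ Hl. apply csum_0. intros a _. apply csum_0. intros b _. apply H. congruence.
Qed.

Lemma csum_box_sumC {A} (L : list A) g n :
  csum L (fun j => box_sumC (g j) n) = box_sumC (fun l a b => csum L (fun j => g j l a b)) n.
Proof.
  rewrite (csum_ext L _ (fun j => csum (seq 0 (S n)) (fun l => csum (zrange n)
    (fun a => csum (zrange n) (fun b => g j l a b))))) by (intros; apply box_sumC_eq).
  rewrite box_sumC_eq, csum_comm. apply csum_ext; intros l _.
  rewrite csum_comm. apply csum_ext; intros a _. apply csum_comm.
Qed.

(** * Extracting a coefficient by grid averages *)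

Lemma Un_cv_const (c : R) : Un_cv (fun _ => c) c.
Proof. intros e He. exists O. intros. unfold Rdist. rewrite Rminus_diag, Rabs_R0. exact He. Qed.

Lemma Cconv_ext u v L : (forall n, u n = v n) -> Cconv u L -> Cconv v L.
Proof.
  intros H [H1 H2].
  split; intros e He; [destruct (H1 e He) as [N HN]|destruct (H2 e He) as [N HN]];
    exists N; intros; rewrite <- H; auto.
Qed.

Lemma Cconv_mul_l K u L : Cconv u L -> Cconv (fun n => Cmul K (u n)) (Cmul K L).
Proof.
  intros [H1 H2]. destruct K as [k1 k2]. cbv [Cmul Re Im fst snd] in *.
  pose proof (Un_cv_const k1). pose proof (Un_cv_const k2). split.
  - apply CV_minus; apply CV_mult; auto.
  - apply CV_plus; apply CV_mult; auto.
Qed.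

Lemma Cconv_csum {A} (L : list A) u Ls : (forall x, In x L -> Cconv (u x) (Ls x)) ->
  Cconv (fun n => csum L (fun x => u x n)) (csum L Ls).
Proof.
  induction L as [|y L IH]; intros H.
  - split; cbn; apply Un_cv_const.
  - destruct (H y (or_introl eq_refl)) as [A1 A2].
    destruct IH as [B1 B2]; [intros; apply H; right; auto|].
    split; apply CV_plus; auto.
Qed.

Lemma Cconv_unique u L1 L2 : Cconv u L1 -> Cconv u L2 -> L1 = L2.
Proof.
  intros [A1 A2] [B1 B2]. destruct L1, L2.
  apply (f_equal2 pair); eapply UL_sequence; eauto.
Qed.

Lemma Un_cv_Rabs_le u L c E N : Un_cv u L ->
  (forall n, (N <= n)%nat -> Rabs (u n - c) <= E) -> Rabs (L - c) <= E.
Proof.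
  intros Hu H. destruct (Rle_dec (Rabs (L - c)) E) as [|Hn]; auto. exfalso.
  destruct (Hu (Rabs (L - c) - E)) as [N1 HN1]; [lra|].
  specialize (HN1 (max N N1) ltac:(lia)). specialize (H (max N N1) ltac:(lia)).
  unfold Rdist in HN1.
  assert (Rabs (L - c) <= Rabs (u (max N N1) - L) + Rabs (u (max N N1) - c)).
  { replace (L - c) with (- (u (max N N1) - L) + (u (max N N1) - c)) by ring.
    eapply Rle_trans; [apply Rabs_triang|]. rewrite Rabs_Ropp. lra. }
  lra.
Qed.

Lemma Un_cv_of_tail_bound (v : nat -> R) L U S R0 : Un_growing U -> Un_cv U S ->
  (forall M, (2 * R0 + 1 <= M)%nat -> Rabs (v M - L) <= S - U ((M - 1) / 2)%nat) ->
  Un_cv v L.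
Proof.
  intros Hgrow HS Hbound e He. destruct (HS e He) as [N1 HN1].
  exists (2 * (N1 + R0) + 1)%nat. intros M HM. unfold Rdist.
  assert (Hm : (N1 <= (M - 1) / 2)%nat) by (apply Nat.div_le_lower_bound; lia).
  specialize (HN1 _ Hm). unfold Rdist in HN1.
  assert (U ((M - 1) / 2)%nat <= S) by (apply growing_ineq; auto).
  specialize (Hbound M ltac:(lia)). rewrite Rabs_left1 in HN1 by lra. lra.
Qed.

Lemma Rabs_proj_le (pr : Cx -> R) z : pr = Re \/ pr = Im -> Rabs (pr z) <= Cabs z.
Proof. intros [-> | ->]; [apply Rabs_Re_le|apply Rabs_Im_le]. Qed.

Lemma proj_box_sumC (pr : Cx -> R) g n : pr = Re \/ pr = Im ->
  pr (box_sumC g n) = box_sumR (fun l a b => pr (g l a b)) n.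
Proof. intros [-> | ->]; [apply Re_box_sumC|apply Im_box_sumC]. Qed.

Lemma box_sumR_outside_le g m n : (m <= n)%nat -> (forall l a b, 0 <= g l a b) ->
  box_sumR (fun l a b => if in_box_dec m l a b then 0 else g l a b) n
  <= box_sumR g n - box_sumR g m.
Proof.
  intros Hmn Hg.
  set (inside := fun l a b => if in_box_dec m l a b then g l a b else 0).
  assert (Hin : box_sumR g m <= box_sumR inside n).
  { apply Rle_trans with (box_sumR inside m).
    - apply Req_le, box_sumR_ext; intros. unfold inside. now destruct in_box_dec.
    - apply box_sumR_mono; auto. intros; unfold inside; destruct in_box_dec; auto; lra. }
  assert (Hsplit : box_sumR g n
    = box_sumR (fun l a b => if in_box_dec m l a b then 0 else g l a b) n + box_sumR inside n).
  { rewrite <- box_sumR_add. apply box_sumR_ext; intros. unfold inside. destruct in_box_dec; ring. }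
  lra.
Qed.

Lemma box_sumC_tail_le (f g : nat -> Z -> Z -> Cx) (pr : Cx -> R) m n :
  pr = Re \/ pr = Im -> (m <= n)%nat ->
  (forall l a b, in_box m l a b -> g l a b = C0) ->
  (forall l a b, Cabs (g l a b) <= Cabs (f l a b)) ->
  Rabs (pr (box_sumC g n))
  <= box_sumR (fun l a b => Cabs (f l a b)) n - box_sumR (fun l a b => Cabs (f l a b)) m.
Proof.
  intros Hpr Hmn Hin Hgf. rewrite proj_box_sumC by auto.
  eapply Rle_trans; [apply Rabs_box_sumR|].
  eapply Rle_trans; [|apply box_sumR_outside_le; auto using Cabs_nonneg].
  apply box_sumR_le. intros l a b _. destruct in_box_dec as [Hb|Hb].
  - rewrite Hin by auto. destruct Hpr as [-> | ->]; cbn; rewrite Rabs_R0; lra.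
  - eapply Rle_trans; [apply Rabs_proj_le; auto|apply Hgf].
Qed.

(* [u1 + u2 omega] for real [u1], [u2] *)
Definition shift_pt (D : Z) (u1 u2 : R) : Cx := (u1 + u2 * (- IZR D / 2), u2 * (sqrt (IZR D) / 2)).

Lemma sqrt_IZR_facts D : (0 < D)%Z -> sqrt (IZR D) * sqrt (IZR D) = IZR D /\ 0 < sqrt (IZR D).
Proof.
  intros HD. assert (0 < IZR D) by (apply IZR_lt; auto).
  split; [apply sqrt_sqrt; lra|apply sqrt_lt_R0; auto].
Qed.

Lemma fterm_translate D cf tau z w l a b x u1 u2 : (0 < D)%Z ->
  fterm D 1 cf (Cadd tau (x, 0)) (Cadd z (shift_pt D u1 u2)) (Cadd w (Cconj (shift_pt D u1 u2))) l a b
  = Cmul (fterm D 1 cf tau z w l a b) (ee (INR l * x + IZR b * u1 - IZR a * u2, 0)).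
Proof.
  intros HD. unfold fterm. destruct Rle_dec; [|symmetry; apply Cmul_0_l].
  rewrite <- Cmul_assoc, <- ee_add. do 2 f_equal.
  destruct (sqrt_IZR_facts D HD) as [Hs Hp].
  unfold t_of, Cdiv, Cinv, sqrtmD, elt, omega, Cnorm2, shift_pt.
  cx. all: set (s := sqrt (IZR D)) in *; clearbody s; rewrite <- Hs; simpl INR; field; lra.
Qed.

Definition grid3 (M : nat) (F : nat -> nat -> nat -> Cx) : Cx :=
  csum (seq 0 M) (fun j0 => csum (seq 0 M) (fun j1 => csum (seq 0 M) (fun j2 => F j0 j1 j2))).

Lemma grid3_ext M F G : (forall j0 j1 j2, F j0 j1 j2 = G j0 j1 j2) -> grid3 M F = grid3 M G.
Proof. intros H; unfold grid3. repeat (apply csum_ext; intros); auto. Qed.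

Lemma grid3_mul_l M k F : Cmul k (grid3 M F) = grid3 M (fun j0 j1 j2 => Cmul k (F j0 j1 j2)).
Proof.
  unfold grid3. rewrite csum_mul_l. apply csum_ext; intros.
  rewrite csum_mul_l. apply csum_ext; intros. apply csum_mul_l.
Qed.

Lemma grid3_box_sumC M g n : grid3 M (fun j0 j1 j2 => box_sumC (g j0 j1 j2) n) =
  box_sumC (fun l a b => grid3 M (fun j0 j1 j2 => g j0 j1 j2 l a b)) n.
Proof.
  unfold grid3. rewrite <- csum_box_sumC. apply csum_ext; intros.
  rewrite <- csum_box_sumC. apply csum_ext; intros. apply csum_box_sumC.
Qed.

Lemma Cconv_grid3 M u Ls : (forall j0 j1 j2, Cconv (u j0 j1 j2) (Ls j0 j1 j2)) ->
  Cconv (fun n => grid3 M (fun j0 j1 j2 => u j0 j1 j2 n)) (grid3 M Ls).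
Proof.
  intros H. unfold grid3. apply Cconv_csum; intros.
  apply (Cconv_csum _ (fun j1 n => csum (seq 0 M) (fun j2 => u x j1 j2 n))); intros.
  apply (Cconv_csum _ (fun j2 n => u x x0 j2 n)); auto.
Qed.

Lemma grid3_ee M n0 n1 n2 :
  grid3 M (fun j0 j1 j2 => ee ((IZR n0 * INR j0 + IZR n1 * INR j1 + IZR n2 * INR j2) / INR M, 0))
  = Cmul (root_sum M n0) (Cmul (root_sum M n1) (root_sum M n2)).
Proof.
  unfold grid3, root_sum. rewrite csum_mul_r. apply csum_ext; intros j0 _.
  rewrite csum_mul_r, csum_mul_l. apply csum_ext; intros j1 _.
  rewrite !csum_mul_l. apply csum_ext; intros j2 _.
  rewrite <- !ee_add. f_equal. cx; unfold Rdiv; ring.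
Qed.

Lemma Zdivide_small (M : nat) x : (Z.of_nat M | x)%Z -> (Z.abs x < Z.of_nat M)%Z -> x = 0%Z.
Proof.
  intros [k ->] H. destruct (Z.eq_dec k 0) as [->|Hk]; [ring|].
  rewrite Z.abs_mul in H. nia.
Qed.

Section GridAverage.

Variables (D : Z) (cf : nat -> Cx -> Cx) (phi : Cx -> Cx -> Cx -> Cx) (tau z w : Cx).
(* [grid_average M] is a Riemann sum over [(Z/MZ)^3] for the integral that extracts the
   [(l0, a0, b0)]-term; the integer matrix [[p al be; q ga de]] skews the grid so that the
   integrands of a form and of its transform can be compared point by point. *)
Variables (p q al be ga de : Z) (l0 : nat) (a0 b0 : Z).

Definition grid_integrand (M j0 j1 j2 : nat) : Cx :=
  let x := INR j0 / INR M in
  let u1 := (IZR p * INR j0 + IZR al * INR j1 + IZR be * INR j2) / INR M in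
  let u2 := (IZR q * INR j0 + IZR ga * INR j1 + IZR de * INR j2) / INR M in
  Cmul (ee (- (INR l0 * x + IZR b0 * u1 - IZR a0 * u2), 0))
    (phi (Cadd tau (x, 0)) (Cadd z (shift_pt D u1 u2)) (Cadd w (Cconj (shift_pt D u1 u2)))).

Definition grid_average (M : nat) : Cx :=
  Cmul (RtoC (/ INR M ^ 3)) (grid3 M (grid_integrand M)).

Definition freq_x (l : nat) (a b : Z) : Z :=
  (Z.of_nat l - Z.of_nat l0 + p * (b - b0) - q * (a - a0))%Z.
Definition freq_u (c d a b : Z) : Z := (c * (b - b0) - d * (a - a0))%Z.

Definition grid_weight (M l : nat) (a b : Z) : Cx :=
  Cmul (RtoC (/ INR M ^ 3)) (Cmul (root_sum M (freq_x l a b))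
    (Cmul (root_sum M (freq_u al ga a b)) (root_sum M (freq_u be de a b)))).

Lemma grid_weight_01 M l a b : (0 < M)%nat ->
  ((Z.of_nat M | freq_x l a b)%Z /\ (Z.of_nat M | freq_u al ga a b)%Z /\
   (Z.of_nat M | freq_u be de a b)%Z /\ grid_weight M l a b = Defs.C1)
  \/ grid_weight M l a b = C0.
Proof.
  intros HM. assert (INR M <> 0) by (apply not_0_INR; lia). unfold grid_weight.
  destruct (Zdivide_dec (Z.of_nat M) (freq_x l a b)) as [H0|H0];
    [rewrite root_sum_dvd by auto|rewrite root_sum_ndvd by auto; right; cx; ring].
  destruct (Zdivide_dec (Z.of_nat M) (freq_u al ga a b)) as [H1|H1];
    [rewrite root_sum_dvd by auto|rewrite root_sum_ndvd by auto; right; cx; ring].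
  destruct (Zdivide_dec (Z.of_nat M) (freq_u be de a b)) as [H2|H2];
    [rewrite root_sum_dvd by auto|rewrite root_sum_ndvd by auto; right; cx; ring].
  left. repeat split; auto. cx; field; auto.
Qed.

Lemma grid_weight_center M : (0 < M)%nat -> grid_weight M l0 a0 b0 = Defs.C1.
Proof.
  intros HM. assert (INR M <> 0) by (apply not_0_INR; lia).
  unfold grid_weight, freq_x, freq_u. rewrite !root_sum_dvd; auto; try (exists 0%Z; ring).
  cx; field; auto.
Qed.

Hypothesis Hdet : (al * de - be * ga = 1)%Z.

(* Unimodularity of [[al be; ga de]] makes the weight vanish at every index congruent to,
   but different from, [(l0, a0, b0)] modulo [M]; in a box of radius [m] with [2 m < M]
   no such index remains. *)
Lemma grid_weight_off_center M m l a b : (0 < M)%nat -> (2 * m < M)%nat ->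
  in_box m l a b -> in_box m l0 a0 b0 -> (l, a, b) <> (l0, a0, b0) -> grid_weight M l a b = C0.
Proof.
  intros HM Hm Hi Hi0 Hne.
  destruct (grid_weight_01 M l a b HM) as [[H0 [H1 [H2 _]]]|]; auto.
  exfalso. unfold freq_x, freq_u, in_box in *.
  assert (Hb : (Z.of_nat M | b - b0)%Z).
  { replace (b - b0)%Z with (de * (al * (b - b0) - ga * (a - a0))
                             - ga * (be * (b - b0) - de * (a - a0)))%Z
      by (transitivity ((al * de - be * ga) * (b - b0))%Z; [|rewrite Hdet]; ring).
    apply Z.divide_sub_r; apply Z.divide_mul_r; auto. }
  assert (Ha : (Z.of_nat M | a - a0)%Z).
  { replace (a - a0)%Z with (be * (al * (b - b0) - ga * (a - a0))
                             - al * (be * (b - b0) - de * (a - a0)))%Z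
      by (transitivity ((al * de - be * ga) * (a - a0))%Z; [|rewrite Hdet]; ring).
    apply Z.divide_sub_r; apply Z.divide_mul_r; auto. }
  assert (Eb := Zdivide_small M _ Hb ltac:(lia)). assert (Ea := Zdivide_small M _ Ha ltac:(lia)).
  assert (Hl : (Z.of_nat M | Z.of_nat l - Z.of_nat l0)%Z).
  { replace (Z.of_nat l - Z.of_nat l0)%Z
      with (Z.of_nat l - Z.of_nat l0 + p * (b - b0) - q * (a - a0))%Z by (rewrite Ea, Eb; ring).
    auto. }
  assert (El := Zdivide_small M _ Hl ltac:(lia)).
  apply Hne. repeat f_equal; lia.
Qed.

Hypotheses (HD : (0 < D)%Z) (Hexp : has_expansion D 1 phi cf) (Hup : upper tau).

Lemma grid_average_series M :
  Cconv (fun n => box_sumC (fun l a b => Cmul (fterm D 1 cf tau z w l a b) (grid_weight M l a b)) n)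
        (grid_average M).
Proof.
  unfold grid_average.
  eapply Cconv_ext; [|apply Cconv_mul_l, Cconv_grid3; intros j0 j1 j2; apply Cconv_mul_l, Hexp;
    unfold upper in *; destruct tau; cbv [Cadd Re Im fst snd] in *; lra].
  intros n. cbv beta.
  rewrite (grid3_ext M _ (fun j0 j1 j2 => box_sumC (fun l a b =>
    Cmul (fterm D 1 cf tau z w l a b)
      (ee ((IZR (freq_x l a b) * INR j0 + IZR (freq_u al ga a b) * INR j1
            + IZR (freq_u be de a b) * INR j2) / INR M, 0))) n)).
  - rewrite grid3_box_sumC, box_sumC_mul_l. apply box_sumC_ext. intros l a b.
    unfold grid_weight. rewrite <- grid3_ee, <- (grid3_mul_l M (fterm D 1 cf tau z w l a b)).
    rewrite !Cmul_assoc, (Cmul_comm (RtoC _)). reflexivity.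
  - intros j0 j1 j2. rewrite box_sumC_mul_l. apply box_sumC_ext. intros l a b.
    rewrite fterm_translate by auto.
    rewrite Cmul_assoc, (Cmul_comm (ee _)), <- Cmul_assoc, <- ee_add.
    do 2 f_equal. unfold freq_x, freq_u. cbv [Cadd Re Im fst snd].
    rewrite !minus_IZR, !plus_IZR, !mult_IZR, !minus_IZR, <- !INR_IZR_INZ.
    apply (f_equal2 pair); unfold Rdiv; ring.
Qed.

Let f := fterm D 1 cf tau z w.
Let U (n : nat) : R := box_sumR (fun l a b => Cabs (f l a b)) n.
Let R0 : nat := (l0 + Z.to_nat (Z.abs a0) + Z.to_nat (Z.abs b0))%nat.

Lemma grid_partial_sum_close (pr : Cx -> R) M n : pr = Re \/ pr = Im ->
  (2 * R0 + 1 <= M)%nat -> ((M - 1) / 2 <= n)%nat ->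
  Rabs (pr (box_sumC (fun l a b => Cmul (f l a b) (grid_weight M l a b)) n) - pr (f l0 a0 b0))
  <= U n - U ((M - 1) / 2)%nat.
Proof.
  intros Hpr HM Hn. set (m := ((M - 1) / 2)%nat) in *.
  assert (Hm1 : (2 * m < M)%nat) by (unfold m; pose proof (Nat.Div0.mul_div_le (M - 1) 2); lia).
  assert (Hm2 : (R0 <= m)%nat) by (unfold m; apply Nat.div_le_lower_bound; lia).
  assert (Hi0 : in_box m l0 a0 b0) by (unfold in_box, R0 in *; lia).
  set (outer := fun l a b => if in_box_dec m l a b then C0 else Cmul (f l a b) (grid_weight M l a b)).
  set (inner := fun l a b => if in_box_dec m l a b then Cmul (f l a b) (grid_weight M l a b) else C0).
  assert (Hinner : box_sumC inner n = f l0 a0 b0).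
  { rewrite (box_sumC_single _ n l0 a0 b0).
    - unfold inner. destruct in_box_dec; [|contradiction].
      rewrite grid_weight_center by lia. apply Cmul_1_r.
    - eapply in_box_le; eauto.
    - intros l a b Hne. unfold inner. destruct in_box_dec; auto.
      rewrite (grid_weight_off_center M m) by (auto; lia). apply Cmul_0_r. }
  assert (Hsplit : box_sumC (fun l a b => Cmul (f l a b) (grid_weight M l a b)) n
                   = Cadd (f l0 a0 b0) (box_sumC outer n)).
  { rewrite <- Hinner, <- box_sumC_add. apply box_sumC_ext; intros. unfold inner, outer.
    destruct in_box_dec; cx; ring. }
  rewrite Hsplit.
  replace (pr (Cadd (f l0 a0 b0) (box_sumC outer n)) - pr (f l0 a0 b0)) with (pr (box_sumC outer n))
    by (destruct Hpr as [-> | ->]; cbn; ring).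
  apply box_sumC_tail_le; auto.
  - intros l a b Hb. unfold outer. now destruct in_box_dec.
  - intros l a b. unfold outer. destruct in_box_dec.
    + rewrite Cabs_C0; apply Cabs_nonneg.
    + destruct (grid_weight_01 M l a b) as [[_ [_ [_ ->]]]| ->]; [lia| |].
      * rewrite Cmul_1_r. apply Rle_refl.
      * rewrite Cmul_0_r, Cabs_C0. apply Cabs_nonneg.
Qed.

Lemma grid_average_cvg : Cconv grid_average (f l0 a0 b0).
Proof.
  assert (Hgrow : Un_growing U).
  { intro n. apply box_sumR_mono; [lia|]. intros; apply Cabs_nonneg. }
  destruct (Hexp tau z w Hup) as [[B HB] _].
  destruct (growing_cv U Hgrow) as [S HS]; [exists B; intros x [n ->]; apply HB|].
  assert (Hkey : forall pr, pr = Re \/ pr = Im -> forall M, (2 * R0 + 1 <= M)%nat ->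
    Rabs (pr (grid_average M) - pr (f l0 a0 b0)) <= S - U ((M - 1) / 2)%nat).
  { intros pr Hpr M HM.
    assert (Hcv : Un_cv (fun n => pr (box_sumC (fun l a b =>
                    Cmul (f l a b) (grid_weight M l a b)) n)) (pr (grid_average M)))
      by (destruct Hpr as [-> | ->]; apply grid_average_series).
    apply (Un_cv_Rabs_le _ _ _ _ ((M - 1) / 2)%nat Hcv). intros n Hn.
    eapply Rle_trans; [apply grid_partial_sum_close; auto|].
    assert (U n <= S) by (apply growing_ineq; auto). lra. }
  split; apply (Un_cv_of_tail_bound _ _ U S R0); auto.
Qed.

End GridAverage.

Lemma fterm_eq_of_grid_integrand_eq D cf phi tau z w p q al be ga de l0 a0 b0
  tau' z' w' p' q' al' be' ga' de' l0' a0' b0' K :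
  (0 < D)%Z -> has_expansion D 1 phi cf -> upper tau -> upper tau' ->
  (al * de - be * ga = 1)%Z -> (al' * de' - be' * ga' = 1)%Z ->
  (forall M j0 j1 j2, grid_integrand D phi tau z w p q al be ga de l0 a0 b0 M j0 j1 j2
     = Cmul K (grid_integrand D phi tau' z' w' p' q' al' be' ga' de' l0' a0' b0' M j0 j1 j2)) ->
  fterm D 1 cf tau z w l0 a0 b0 = Cmul K (fterm D 1 cf tau' z' w' l0' a0' b0').
Proof.
  intros HD Hexp Hup Hup' Hdet Hdet' H.
  apply (Cconv_unique (grid_average D phi tau z w p q al be ga de l0 a0 b0));
    [apply grid_average_cvg; auto|].
  eapply Cconv_ext; [|apply Cconv_mul_l, (grid_average_cvg D cf phi tau' z' w' p' q' al' be' ga' de');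
    auto].
  intros M. unfold grid_average.
  rewrite Cmul_assoc, (Cmul_comm K), <- Cmul_assoc, grid3_mul_l. f_equal.
  apply grid3_ext; intros. symmetry; apply H.
Qed.

Definition fourier_arg (l : nat) (t tau z w : Cx) : Cx :=
  Cadd (Cadd (Cmul (RtoC (INR l)) tau) (Cmul (Cconj t) z)) (Cmul t w).

Lemma fourier_arg_0 l t tau : fourier_arg l t tau C0 C0 = Cmul (RtoC (INR l)) tau.
Proof. unfold fourier_arg. rewrite !Cmul_0_r, !Cadd_0_r. reflexivity. Qed.

Lemma fterm_eq D cf tau z w l a b : Cnorm2 (t_of D a b) <= INR l ->
  fterm D 1 cf tau z w l a b = Cmul (cf l (t_of D a b)) (ee (fourier_arg l (t_of D a b) tau z w)).
Proof.
  intros H. unfold fterm, fourier_arg. destruct Rle_dec as [_|Hn]; [|simpl INR in Hn; lra].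
  do 5 f_equal. unfold RtoC. f_equal. simpl INR. field.
Qed.

Lemma coeff_eq_of_fterm_eq D cf tau z w l a b tau' z' w' l' a' b' K :
  Cnorm2 (t_of D a b) <= INR l -> Cnorm2 (t_of D a' b') <= INR l' ->
  fterm D 1 cf tau z w l a b = Cmul K (fterm D 1 cf tau' z' w' l' a' b') ->
  ee (fourier_arg l (t_of D a b) tau z w) = Cmul K (ee (fourier_arg l' (t_of D a' b') tau' z' w')) ->
  cf l (t_of D a b) = cf l' (t_of D a' b').
Proof.
  intros H1 H2 H HK. rewrite !fterm_eq in H by auto.
  apply (Cmul_cancel_r _ _ (ee (fourier_arg l (t_of D a b) tau z w))); [apply ee_neq0|].
  rewrite H, HK, !Cmul_assoc, (Cmul_comm K). reflexivity.
Qed.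

(** * Symmetries of the coefficients *)

Lemma slash_id k eps phi tau z w :
  slash k 1 0 0 1 eps phi tau z w = phi tau (Cmul eps z) (Cmul (Cconj eps) w).
Proof.
  unfold slash.
  replace (Cadd (Cmul (ZtoC 0) tau) (ZtoC 1)) with Defs.C1 by (cx; simpl; ring).
  replace (Cpow Defs.C1 k) with Defs.C1 by (induction k; simpl; [|rewrite <- IHk, Cmul_1_l]; auto).
  replace (Cinv Defs.C1) with Defs.C1 by (unfold Cinv, Cnorm2; cx; simpl; field).
  replace (Copp (Cdiv (Cmul (Cmul (ZtoC 0) z) w) Defs.C1)) with C0
    by (unfold Cdiv, Cinv, Cnorm2; cx; simpl; field).
  rewrite ee_0, !Cmul_1_l. unfold Cdiv, Cinv, Cnorm2.
  f_equal; cx; simpl; field.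
Qed.

Lemma HJF_unit_invariant D k N phi eps tau z w : is_HJF D k N phi -> is_unit D eps -> upper tau ->
  phi tau (Cmul eps z) (Cmul (Cconj eps) w) = phi tau z w.
Proof. intros [_ [Ha _]] He Hu. rewrite <- (slash_id k). apply Ha; auto. exists 0%Z; ring. Qed.

Lemma HJF_translate D k N phi lam tau z w : is_HJF D k N phi -> in_O D lam -> upper tau ->
  phi tau z w = Cmul (ee (Cadd (Cadd (Cmul (RtoC (Cnorm2 lam)) tau) (Cmul (Cconj lam) z)) (Cmul lam w)))
                     (phi tau (Cadd z (Cmul lam tau)) (Cadd w (Cmul (Cconj lam) tau))).
Proof.
  intros [_ [_ [Hb _]]] Hl Hu. rewrite <- (Hb lam C0 Hl) at 1; auto.
  - f_equal. f_equal; cx; ring.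
  - exists 0%Z, 0%Z. unfold elt; cx; simpl; ring.
Qed.

Lemma is_unit_m1 D : is_unit D (-1, 0).
Proof.
  split; [|split].
  - intro H; injection H; lra.
  - exists (-1)%Z, 0%Z. unfold elt; cx; simpl; ring.
  - exists (-1)%Z, 0%Z. unfold elt, Cinv, Cnorm2; cx; simpl; field.
Qed.

Lemma sqrt_IZR4 : sqrt (IZR 4) = 2.
Proof. replace (IZR 4) with (2 * 2) by (simpl; ring). apply sqrt_square; lra. Qed.

Lemma is_unit_i : is_unit 4 (0, 1).
Proof.
  split; [|split].
  - intro H; injection H; lra.
  - exists 2%Z, 1%Z. unfold elt, omega. rewrite sqrt_IZR4. cx; simpl; field.
  - exists (-2)%Z, (-1)%Z. unfold elt, omega, Cinv, Cnorm2. rewrite sqrt_IZR4. cx; simpl; field.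
Qed.

Definition tau0 : Cx := (0, 1).

Lemma upper_tau0_shift x : upper (Cadd tau0 (x, 0)).
Proof. unfold upper, tau0, Cadd, Im; simpl; lra. Qed.

Lemma Cconj_mul x y : Cmul (Cconj x) (Cconj y) = Cconj (Cmul x y).
Proof. cx; ring. Qed.

(* If multiplication by the unit [eps] acts on [u1 + u2 omega] through the integer matrix
   [E = [e11 e12; e21 e22]], the grid averages for [t] and for [t'] coincide, where
   [(b, -a) = E^T (b', -a')]. *)
Lemma coeff_unit_invariant D k N phi cf eps e11 e12 e21 e22 l a b a' b' :
  (0 < D)%Z -> is_HJF D k N phi -> has_expansion D 1 phi cf -> is_unit D eps ->
  (e11 * e22 - e12 * e21 = 1)%Z ->
  (forall u1 u2, Cmul eps (shift_pt D u1 u2)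
                 = shift_pt D (IZR e11 * u1 + IZR e12 * u2) (IZR e21 * u1 + IZR e22 * u2)) ->
  b = (b' * e11 - a' * e21)%Z -> a = (a' * e22 - b' * e12)%Z ->
  Cnorm2 (t_of D a b) <= INR l -> Cnorm2 (t_of D a' b') <= INR l ->
  cf l (t_of D a b) = cf l (t_of D a' b').
Proof.
  intros HD Hphi Hexp Heps Hdet Hmul Hb Ha Hl Hl'.
  apply (coeff_eq_of_fterm_eq D cf tau0 C0 C0 l a b tau0 C0 C0 l a' b' Defs.C1); auto;
    [|rewrite !fourier_arg_0, Cmul_1_l; reflexivity].
  apply (fterm_eq_of_grid_integrand_eq D cf phi tau0 C0 C0 0 0 1 0 0 1 l a b
           tau0 C0 C0 0 0 e11 e12 e21 e22 l a' b'); auto;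
    try (unfold upper, tau0, Im; simpl; lra).
  intros M j0 j1 j2. unfold grid_integrand; cbv zeta. rewrite Cmul_1_l.
  set (u1 := (IZR 0 * INR j0 + IZR 1 * INR j1 + IZR 0 * INR j2) / INR M).
  set (u2 := (IZR 0 * INR j0 + IZR 0 * INR j1 + IZR 1 * INR j2) / INR M).
  replace ((IZR 0 * INR j0 + IZR e11 * INR j1 + IZR e12 * INR j2) / INR M)
    with (IZR e11 * u1 + IZR e12 * u2) by (unfold u1, u2, Rdiv; ring).
  replace ((IZR 0 * INR j0 + IZR e21 * INR j1 + IZR e22 * INR j2) / INR M)
    with (IZR e21 * u1 + IZR e22 * u2) by (unfold u1, u2, Rdiv; ring).
  f_equal.
  - do 2 f_equal. subst a b. rewrite !minus_IZR, !mult_IZR. ring.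
  - rewrite <- (HJF_unit_invariant D k N phi eps) by (auto; apply upper_tau0_shift).
    rewrite !Cadd_0_l, Cconj_mul, Hmul. reflexivity.
Qed.

Lemma coeff_opp D k N phi cf l a b : (0 < D)%Z -> is_HJF D k N phi -> has_expansion D 1 phi cf ->
  Cnorm2 (t_of D a b) <= INR l -> Cnorm2 (t_of D (-a) (-b)) <= INR l ->
  cf l (t_of D a b) = cf l (t_of D (-a) (-b)).
Proof.
  intros. apply (coeff_unit_invariant D k N phi cf (-1, 0) (-1) 0 0 (-1)); auto; try lia.
  - apply is_unit_m1.
  - intros u1 u2. unfold shift_pt. cx; simpl; ring.
Qed.

Lemma coeff_mul_i k N phi cf l a b : is_HJF 4 k N phi -> has_expansion 4 1 phi cf ->
  Cnorm2 (t_of 4 a b) <= INR l -> Cnorm2 (t_of 4 (2 * a - 5 * b) (a - 2 * b)) <= INR l ->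
  cf l (t_of 4 a b) = cf l (t_of 4 (2 * a - 5 * b) (a - 2 * b)).
Proof.
  intros. apply (coeff_unit_invariant 4 k N phi cf (0, 1) 2 (-5) 1 (-2)); auto; try lia.
  - apply is_unit_i.
  - intros u1 u2. unfold shift_pt. rewrite sqrt_IZR4. cx; simpl; field.
Qed.

(** * The norm form and translations *)

(* [normZ D H4 a b] is the norm of [a + b omega], where [H4 = (D^2 + D) / 4]. *)
Definition normZ (D H4 a b : Z) : Z := (a * a - a * b * D + b * b * H4)%Z.

Section NormForm.

Variables (D H4 : Z).
Hypotheses (HD : (0 < D)%Z) (HH4 : (4 * H4 = D * D + D)%Z).

Lemma IZR_H4 : IZR H4 = (IZR D * IZR D + IZR D) / 4.
Proof.
  apply (Rmult_eq_reg_l 4); [|lra].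
  replace (4 * ((IZR D * IZR D + IZR D) / 4)) with (IZR D * IZR D + IZR D) by field.
  rewrite <- !mult_IZR, <- plus_IZR. f_equal. exact HH4.
Qed.

Lemma Cnorm2_t_of a b : Cnorm2 (t_of D a b) * IZR D = IZR (normZ D H4 a b).
Proof.
  destruct (sqrt_IZR_facts D HD) as [Hs Hp]. unfold normZ.
  repeat rewrite ?plus_IZR, ?minus_IZR, ?mult_IZR, IZR_H4.
  unfold t_of, Cdiv, Cinv, sqrtmD, elt, omega, ZtoC, Cnorm2.
  cbv [Cmul Cadd Copp Csub Cconj C0 Defs.C1 RtoC ZtoC Re Im fst snd].
  set (s := sqrt (IZR D)) in *. clearbody s. rewrite <- Hs. field. lra.
Qed.

Lemma Cnorm2_t_of_eq a b a' b' : normZ D H4 a b = normZ D H4 a' b' ->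
  Cnorm2 (t_of D a b) = Cnorm2 (t_of D a' b').
Proof.
  intros H. assert (0 < IZR D) by (apply IZR_lt; auto).
  apply (Rmult_eq_reg_r (IZR D)); [|lra]. rewrite !Cnorm2_t_of, H. reflexivity.
Qed.

Lemma normZ_eq_of_discr_eq l1 l2 a1 b1 a2 b2 :
  INR l1 - Cnorm2 (t_of D a1 b1) = INR l2 - Cnorm2 (t_of D a2 b2) ->
  (D * Z.of_nat l1 - normZ D H4 a1 b1 = D * Z.of_nat l2 - normZ D H4 a2 b2)%Z.
Proof.
  intros Heq. apply eq_IZR. rewrite !minus_IZR, !mult_IZR, <- !INR_IZR_INZ, <- !Cnorm2_t_of.
  transitivity (IZR D * (INR l1 - Cnorm2 (t_of D a1 b1))); [ring|]. rewrite Heq. ring.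
Qed.

Section Translation.

Variables (p q : Z) (l0 : nat) (a0 b0 : Z) (l1 : nat).

(* Translation by [lam = p + q omega] sends [t] to [t - lam]; these are its coordinates. *)
Let a1 : Z := (a0 - p * D + 2 * q * H4)%Z.
Let b1 : Z := (b0 - 2 * p + q * D)%Z.
Hypothesis Hl1 : Z.of_nat l1 = (Z.of_nat l0 - normZ D H4 p q - p * b1 + q * a1)%Z.

Let lam : Cx := elt D p q.
Let K : Cx := ee (Cmul (RtoC (Cnorm2 lam)) tau0).

Lemma INR_l1 : INR l1 = INR l0 - (IZR p * IZR p - IZR p * IZR q * IZR D + IZR q * IZR q * IZR H4)
  - IZR p * IZR b1 + IZR q * IZR a1.
Proof.
  rewrite !INR_IZR_INZ, Hl1. unfold normZ.
  repeat rewrite ?plus_IZR, ?minus_IZR, ?mult_IZR. reflexivity.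
Qed.

Lemma translate_grid_phase x u1 u2 :
  Cmul (ee (- (INR l0 * x + IZR b0 * u1 - IZR a0 * u2), 0))
    (ee (Cadd (Cadd (Cmul (RtoC (Cnorm2 lam)) (Cadd tau0 (x, 0)))
                    (Cmul (Cconj lam) (Cadd C0 (shift_pt D u1 u2))))
              (Cmul lam (Cadd C0 (Cconj (shift_pt D u1 u2))))))
  = Cmul K (ee (- (INR l1 * x + IZR b1 * (IZR p * x + u1) - IZR a1 * (IZR q * x + u2)), 0)).
Proof.
  destruct (sqrt_IZR_facts D HD) as [Hs Hp].
  unfold K. rewrite <- !ee_add. apply f_equal. rewrite INR_l1.
  unfold a1, b1, lam, elt, omega, shift_pt, tau0, Cnorm2.
  cbv [Cmul Cadd Copp Csub Cconj C0 Defs.C1 RtoC ZtoC Re Im fst snd].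
  repeat rewrite ?plus_IZR, ?minus_IZR, ?mult_IZR, IZR_H4.
  set (s := sqrt (IZR D)) in *. clearbody s. rewrite <- Hs. apply (f_equal2 pair); field.
Qed.

Lemma translate_fourier_phase :
  ee (fourier_arg l0 (t_of D a0 b0) tau0 C0 C0)
  = Cmul K (ee (fourier_arg l1 (t_of D a1 b1) tau0 (Cmul lam tau0) (Cmul (Cconj lam) tau0))).
Proof.
  destruct (sqrt_IZR_facts D HD) as [Hs Hp].
  unfold K. rewrite <- ee_add. apply f_equal. rewrite fourier_arg_0.
  unfold fourier_arg. rewrite INR_l1. unfold a1, b1, lam, t_of, Cdiv, Cinv, sqrtmD, elt, omega, tau0, Cnorm2.
  cbv [Cmul Cadd Copp Csub Cconj C0 Defs.C1 RtoC ZtoC Re Im fst snd].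
  repeat rewrite ?plus_IZR, ?minus_IZR, ?mult_IZR, IZR_H4.
  set (s := sqrt (IZR D)) in *. clearbody s. rewrite <- Hs. apply (f_equal2 pair); field; lra.
Qed.

Lemma translate_shift x u1 u2 :
  Cadd (Cadd C0 (shift_pt D u1 u2)) (Cmul lam (Cadd tau0 (x, 0)))
  = Cadd (Cmul lam tau0) (shift_pt D (IZR p * x + u1) (IZR q * x + u2)) /\
  Cadd (Cadd C0 (Cconj (shift_pt D u1 u2))) (Cmul (Cconj lam) (Cadd tau0 (x, 0)))
  = Cadd (Cmul (Cconj lam) tau0) (Cconj (shift_pt D (IZR p * x + u1) (IZR q * x + u2))).
Proof. unfold lam, elt, omega, shift_pt, tau0. split; cx; ring. Qed.

Lemma coeff_translate k N phi cf : is_HJF D k N phi -> has_expansion D 1 phi cf ->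
  Cnorm2 (t_of D a0 b0) <= INR l0 -> Cnorm2 (t_of D a1 b1) <= INR l1 ->
  cf l0 (t_of D a0 b0) = cf l1 (t_of D a1 b1).
Proof.
  intros Hphi Hexp Hc0 Hc1.
  apply (coeff_eq_of_fterm_eq D cf tau0 C0 C0 l0 a0 b0
           tau0 (Cmul lam tau0) (Cmul (Cconj lam) tau0) l1 a1 b1 K); auto;
    [|apply translate_fourier_phase].
  apply (fterm_eq_of_grid_integrand_eq D cf phi tau0 C0 C0 0 0 1 0 0 1 l0 a0 b0
           tau0 (Cmul lam tau0) (Cmul (Cconj lam) tau0) p q 1 0 0 1 l1 a1 b1 K); auto;
    try (unfold upper, tau0, Im; simpl; lra).
  intros M j0 j1 j2. unfold grid_integrand; cbv zeta.
  set (x := INR j0 / INR M).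
  set (u1 := (IZR 0 * INR j0 + IZR 1 * INR j1 + IZR 0 * INR j2) / INR M).
  set (u2 := (IZR 0 * INR j0 + IZR 0 * INR j1 + IZR 1 * INR j2) / INR M).
  replace ((IZR p * INR j0 + IZR 1 * INR j1 + IZR 0 * INR j2) / INR M)
    with (IZR p * x + u1) by (unfold x, u1, Rdiv; ring).
  replace ((IZR q * INR j0 + IZR 0 * INR j1 + IZR 1 * INR j2) / INR M)
    with (IZR q * x + u2) by (unfold x, u2, Rdiv; ring).
  rewrite (HJF_translate D k N phi lam) 
    by first [exact Hphi | exists p, q; reflexivity | apply upper_tau0_shift].
  destruct (translate_shift x u1 u2) as [-> ->].
  rewrite !Cmul_assoc, translate_grid_phase. reflexivity.
Qed.

End Translation.

Lemma coeff_eq_of_congruent k N phi cf s p q l1 a1 b1 l2 a2 b2 :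
  is_HJF D k N phi -> has_expansion D 1 phi cf ->
  (s = 1 \/ s = -1)%Z ->
  a2 = (s * a1 - p * D + 2 * q * H4)%Z -> b2 = (s * b1 - 2 * p + q * D)%Z ->
  (D * Z.of_nat l1 - normZ D H4 a1 b1 = D * Z.of_nat l2 - normZ D H4 a2 b2)%Z ->
  Cnorm2 (t_of D a1 b1) <= INR l1 -> Cnorm2 (t_of D a2 b2) <= INR l2 ->
  cf l1 (t_of D a1 b1) = cf l2 (t_of D a2 b2).
Proof.
  intros Hphi Hexp Hs -> -> Hnorm Hc1 Hc2.
  assert (Hns : Cnorm2 (t_of D (s * a1) (s * b1)) = Cnorm2 (t_of D a1 b1)).
  { apply Cnorm2_t_of_eq. unfold normZ. destruct Hs; subst s; ring. }
  transitivity (cf l1 (t_of D (s * a1) (s * b1))).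
  - destruct Hs; subst s; [now rewrite !Z.mul_1_l|].
    replace (-1 * a1)%Z with (- a1)%Z in * by ring.
    replace (-1 * b1)%Z with (- b1)%Z in * by ring.
    apply (coeff_opp D k N phi cf); auto. rewrite Hns; auto.
  - refine (coeff_translate p q l1 (s * a1) (s * b1) l2 _ k N phi cf Hphi Hexp _ Hc2);
      [|rewrite Hns; exact Hc1].
    apply (Z.mul_reg_l _ _ D); [lia|].
    (* [l - N(t)] is invariant under the translation; this needs [4 H4 = D^2 + D]. *)
    assert (E : (normZ D H4 (s * a1 - p * D + 2 * q * H4) (s * b1 - 2 * p + q * D)
                 - normZ D H4 (s * a1) (s * b1)
                 + D * (normZ D H4 p q + p * (s * b1 - 2 * p + q * D)
                        - q * (s * a1 - p * D + 2 * q * H4)) = 0)%Z).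
    { unfold normZ.
      transitivity ((4 * H4 - D * D - D)
                    * (q * (s * a1) - p * (s * b1) + p * p - p * q * D + q * q * H4))%Z;
        [ring|rewrite HH4; ring]. }
    assert (E2 : normZ D H4 (s * a1) (s * b1) = normZ D H4 a1 b1)
      by (unfold normZ; destruct Hs; subst s; ring).
    lia.
Qed.

End NormForm.

(** * Equal discriminants *)

Open Scope Z_scope.

Lemma sum_sq_mod4_classes (a1 b1 a2 b2 W : Z) : a1*a1 + b1*b1 - a2*a2 - b2*b2 = 4*W ->
  (exists A B, a2 - a1 = 2*A /\ b2 - b1 = 2*B) \/ (exists A B, a2 - b1 = 2*A /\ b2 - a1 = 2*B).
Proof.
  intros H.
  pose proof (Z.div_mod a1 2 ltac:(lia)). pose proof (Z.mod_pos_bound a1 2 ltac:(lia)).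
  pose proof (Z.div_mod a2 2 ltac:(lia)). pose proof (Z.mod_pos_bound a2 2 ltac:(lia)).
  pose proof (Z.div_mod b1 2 ltac:(lia)). pose proof (Z.mod_pos_bound b1 2 ltac:(lia)).
  pose proof (Z.div_mod b2 2 ltac:(lia)). pose proof (Z.mod_pos_bound b2 2 ltac:(lia)).
  revert H H0 H1 H2 H3 H4 H5 H6 H7.
  generalize (a1 / 2) (a1 mod 2) (a2 / 2) (a2 mod 2) (b1 / 2) (b1 mod 2) (b2 / 2) (b2 mod 2).
  intros x1 r1 x2 r2 y1 t1 y2 t2 H -> Hr1 -> Hr2 -> Ht1 -> Ht2.
  assert (C1 : r1 = 0 \/ r1 = 1) by lia. assert (C2 : r2 = 0 \/ r2 = 1) by lia.
  assert (C3 : t1 = 0 \/ t1 = 1) by lia. assert (C4 : t2 = 0 \/ t2 = 1) by lia.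
  destruct C1 as [-> | ->]; destruct C2 as [-> | ->];
  destruct C3 as [-> | ->]; destruct C4 as [-> | ->];
  first [ left; exists (x2 - x1), (y2 - y1); split; lia
        | right; exists (x2 - y1), (y2 - x1); split; lia
        | right; exists (x2 - y1 + 1), (y2 - x1); split; lia
        | right; exists (x2 - y1), (y2 - x1 + 1); split; lia
        | right; exists (x2 - y1 + 1), (y2 - x1 + 1); split; lia
        | exfalso; lia ].
Qed.

Lemma sq_add_2sq_mod8_classes (a1 b1 a2 b2 W : Z) : a1*a1 + 2*b1*b1 - a2*a2 - 2*b2*b2 = 8*W ->
  exists s A B, (s = 1 \/ s = -1) /\ a2 - s*a1 = 4*A /\ b2 - s*b1 = 2*B.
Proof.
  intros H.
  pose proof (Z.div_mod a1 4 ltac:(lia)). pose proof (Z.mod_pos_bound a1 4 ltac:(lia)).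
  pose proof (Z.div_mod a2 4 ltac:(lia)). pose proof (Z.mod_pos_bound a2 4 ltac:(lia)).
  pose proof (Z.div_mod b1 2 ltac:(lia)). pose proof (Z.mod_pos_bound b1 2 ltac:(lia)).
  pose proof (Z.div_mod b2 2 ltac:(lia)). pose proof (Z.mod_pos_bound b2 2 ltac:(lia)).
  revert H H0 H1 H2 H3 H4 H5 H6 H7.
  generalize (a1 / 4) (a1 mod 4) (a2 / 4) (a2 mod 4) (b1 / 2) (b1 mod 2) (b2 / 2) (b2 mod 2).
  intros x1 r1 x2 r2 y1 t1 y2 t2 H -> Hr1 -> Hr2 -> Ht1 -> Ht2.
  assert (C1 : r1 = 0 \/ r1 = 1 \/ r1 = 2 \/ r1 = 3) by lia.
  assert (C2 : r2 = 0 \/ r2 = 1 \/ r2 = 2 \/ r2 = 3) by lia.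
  assert (C3 : t1 = 0 \/ t1 = 1) by lia. assert (C4 : t2 = 0 \/ t2 = 1) by lia.
  destruct C1 as [-> | [-> | [-> | ->]]]; destruct C2 as [-> | [-> | [-> | ->]]];
  destruct C3 as [-> | ->]; destruct C4 as [-> | ->];
  first [ exists 1, (x2 - x1), (y2 - y1); split; [left; reflexivity|split; lia]
        | exists (-1), (x2 + x1), (y2 + y1); split; [right; reflexivity|split; lia]
        | exists (-1), (x2 + x1 + 1), (y2 + y1); split; [right; reflexivity|split; lia]
        | exists (-1), (x2 + x1), (y2 + y1 + 1); split; [right; reflexivity|split; lia]
        | exists (-1), (x2 + x1 + 1), (y2 + y1 + 1); split; [right; reflexivity|split; lia]
        | exfalso; lia ].
Qed.

Close Scope Z_scope.

Lemma coeff_eq_D4 k N phi cf l1 a1 b1 l2 a2 b2 : is_HJF 4 k N phi -> has_expansion 4 1 phi cf ->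
  (4 * Z.of_nat l1 - normZ 4 5 a1 b1 = 4 * Z.of_nat l2 - normZ 4 5 a2 b2)%Z ->
  Cnorm2 (t_of 4 a1 b1) <= INR l1 -> Cnorm2 (t_of 4 a2 b2) <= INR l2 ->
  cf l1 (t_of 4 a1 b1) = cf l2 (t_of 4 a2 b2).
Proof.
  intros Hphi Hexp Hnorm Hc1 Hc2.
  destruct (sum_sq_mod4_classes a1 b1 a2 b2
              (Z.of_nat l1 - Z.of_nat l2 + a1 * b1 - a2 * b2 - b1 * b1 + b2 * b2))
    as [[A [B [EA EB]]]|[A [B [EA EB]]]]; [unfold normZ in Hnorm; lia| |].
  - apply (coeff_eq_of_congruent 4 5 ltac:(lia) ltac:(lia) k N phi cf 1 (2 * A - 5 * B) (A - 2 * B));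
      auto; lia.
  - assert (Hi : Cnorm2 (t_of 4 (2 * a1 - 5 * b1) (a1 - 2 * b1)) = Cnorm2 (t_of 4 a1 b1))
      by (apply (Cnorm2_t_of_eq 4 5); [lia|lia|unfold normZ; ring]).
    rewrite (coeff_mul_i k N phi cf l1 a1 b1) by (rewrite ?Hi; auto).
    apply (coeff_eq_of_congruent 4 5 ltac:(lia) ltac:(lia) k N phi cf 1
             (2 * (A - a1 + 3 * b1) - 5 * (B + b1)) (A - a1 + 3 * b1 - 2 * (B + b1)));
      try rewrite Hi; auto; try lia.
    unfold normZ in *. lia.
Qed.

Lemma coeff_eq_D8 k N phi cf l1 a1 b1 l2 a2 b2 : is_HJF 8 k N phi -> has_expansion 8 1 phi cf ->
  (8 * Z.of_nat l1 - normZ 8 18 a1 b1 = 8 * Z.of_nat l2 - normZ 8 18 a2 b2)%Z ->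
  Cnorm2 (t_of 8 a1 b1) <= INR l1 -> Cnorm2 (t_of 8 a2 b2) <= INR l2 ->
  cf l1 (t_of 8 a1 b1) = cf l2 (t_of 8 a2 b2).
Proof.
  intros Hphi Hexp Hnorm Hc1 Hc2.
  destruct (sq_add_2sq_mod8_classes a1 b1 a2 b2
              (Z.of_nat l1 - Z.of_nat l2 + a1 * b1 - a2 * b2 - 2 * b1 * b1 + 2 * b2 * b2))
    as [s [A [B [Hs [EA EB]]]]]; [unfold normZ in Hnorm; lia|].
  apply (coeff_eq_of_congruent 8 18 ltac:(lia) ltac:(lia) k N phi cf s (4 * A - 9 * B) (A - 2 * B));
    auto; lia.
Qed.

(* [N(a + b omega) = a^2] modulo the prime [D], so equal discriminants force [a2 = +-a1]
   modulo [D], which is exactly what a translation up to sign can achieve. *)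
Lemma coeff_eq_prime D e k N phi cf l1 a1 b1 l2 a2 b2 : prime D -> D = (4 * e + 3)%Z ->
  is_HJF D k N phi -> has_expansion D 1 phi cf ->
  (D * Z.of_nat l1 - normZ D (D * (e + 1)) a1 b1 = D * Z.of_nat l2 - normZ D (D * (e + 1)) a2 b2)%Z ->
  Cnorm2 (t_of D a1 b1) <= INR l1 -> Cnorm2 (t_of D a2 b2) <= INR l2 ->
  cf l1 (t_of D a1 b1) = cf l2 (t_of D a2 b2).
Proof.
  intros Hpr ED Hphi Hexp Hnorm Hc1 Hc2.
  assert (HD : (0 < D)%Z) by (destruct Hpr; lia).
  assert (Hdvd : (D | (a2 - a1) * (a2 + a1))%Z).
  { exists (Z.of_nat l2 - Z.of_nat l1 + a2 * b2 - a1 * b1 - (b2 * b2 - b1 * b1) * (e + 1))%Z.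
    unfold normZ in Hnorm. subst D. lia. }
  assert (Hs : exists s m, (s = 1 \/ s = -1)%Z /\ (a2 - s * a1 = D * m)%Z).
  { destruct (prime_mult D Hpr _ _ Hdvd) as [[m Hm]|[m Hm]].
    - exists 1%Z, m. split; [left; auto|lia].
    - exists (-1)%Z, m. split; [right; auto|lia]. }
  destruct Hs as [s [m [Hs Hm]]].
  apply (coeff_eq_of_congruent D (D * (e + 1)) HD ltac:(subst D; ring) k N phi cf s
           (D * m - (2 * e + 2) * (b2 - s * b1)) (2 * m - (b2 - s * b1))); auto.
  - subst D. assert (a2 = s * a1 + (4 * e + 3) * m)%Z as -> by lia. ring.
  - subst D. ring.
Qed.

Theorem proposition2p7 (D : Z) (N k : nat)
  (hcl : class_number_one D)
  (hD : (D = 4 \/ D = 8 \/ (prime D /\ D mod 4 = 3))%Z)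
  (hN : (1 <= N)%nat) (hk : (0 < k)%nat)
  (hunits : units_card_divides D k) :
  forall phi : Cx -> Cx -> Cx -> Cx, is_HJF_spez D k N phi <-> is_HJF D k N phi.
Proof.
  (* Only the symmetries (a) with M = I and (b) are used: [hcl], [hN], [hk], [hunits] are not. *)
  intros phi. split; [now intros [Hphi _]|]. intros Hphi. split; [exact Hphi|].
  intros cf Hexp l1 l2 t1 t2 [x1 [[a1 [b1 ->]] ->]] [x2 [[a2 [b2 ->]] ->]] Hc1 Hc2 Heq.
  fold (t_of D a1 b1) (t_of D a2 b2) in *.
  destruct hD as [-> | [-> | [Hpr HDmod]]].
  - apply (coeff_eq_D4 k N phi); auto. apply (normZ_eq_of_discr_eq 4 5); auto; lia.
  - apply (coeff_eq_D8 k N phi); auto. apply (normZ_eq_of_discr_eq 8 18); auto; lia.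
  - assert (ED : D = (4 * (D / 4) + 3)%Z) by (rewrite <- HDmod; apply Z.div_mod; lia).
    apply (coeff_eq_prime D (D / 4) k N phi); auto.
    apply normZ_eq_of_discr_eq; auto; [destruct Hpr; lia|].
    transitivity (D * (4 * (D / 4) + 4))%Z; [ring|]. replace (4 * (D / 4) + 4)%Z with (D + 1)%Z by lia. ring.
Qed.
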